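(* In $\mathrm{OPT}_\tau$, every loop whose entry points lie on $C_{\tau+1}$ (the bottom cover-line of $S_\tau$) either exclusively covers a top segment, or is a cover-line loop. The analogous statement holds for loops with entry points on $C_\tau$ (with bottom segments in place of top segments).
   Context: Instance: vertical line segments in $\mathbb{R}^2$, each of length $1$, with pairwise distinct $x$-coordinates; the minimal bounding box has height $H>3$. A tour is a cyclic sequence of points, each on some segment, with each segment containing one of them; consecutive points are joined by straight legs; cost is total length. $\mathrm{OPT}$ is a fixed oriented minimum-cost tour with no two consecutive points on the same segment and not self-crossing. Cover-lines: horizontal lines $C_1,C_2,\dots$ (top to bottom) spaced $1$ apart, $C_1$ through the bottom tip of the top-most segment; a segment is covered by the top-most cover-line intersecting it. Strip $S_\tau$: closed region between $C_\tau$ and $C_{\tau+1}$; top segments of $S_\tau$: those intersecting $C_\tau$; bottom segments: those covered by $C_{\tau+1}$. $\mathrm{OPT}_\tau$: restriction of $\mathrm{OPT}$ to $S_\tau$ (points added where legs meet the cover-lines), a collection of subpaths each with two entry points on the cover-lines; a loop has both entry points on the same cover-line. A cover-line loop is a loop that enters $S_\tau$ at a point of a cover-line, travels along that cover-line and exits. A segment $s$ in $S_\tau$ is exclusively covered by a path $P$ of $\mathrm{OPT}_\tau$ if $P$ intersects $s$ and no other path of $\mathrm{OPT}_\tau$ intersects $s$. *)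

From Stdlib Require Import Reals Lra List ZArith.
Open Scope R_scope.

Definition pt : Type := (R * R)%type.

(** A vertical segment of length 1, given by its x-coordinate and the
    y-coordinate of its bottom tip: {(sx, y) | sb <= y <= sb + 1}. *)
Definition seg : Type := (R * R)%type.
Definition sx (s : seg) : R := fst s.
Definition sb (s : seg) : R := snd s.

Definition on_seg (p : pt) (s : seg) : Prop :=
  fst p = sx s /\ sb s <= snd p <= sb s + 1.

Definition bbox_top (I : list seg) : R :=
  match I with
  | nil => 0
  | s :: r => fold_right (fun s' acc => Rmax (sb s' + 1) acc) (sb s + 1) r
  end.
Definition bbox_bot (I : list seg) : R :=
  match I with
  | nil => 0
  | s :: r => fold_right (fun s' acc => Rmin (sb s') acc) (sb s) r
  end.
Definition bbox_height (I : list seg) : R := bbox_top I - bbox_bot I.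

Definition instance (I : list seg) : Prop :=
  I <> nil /\ NoDup (map sx I).

(** Tours: cyclic sequences of points; index arithmetic is modulo length. *)
Definition tpt (T : list pt) (k : nat) : pt := nth (k mod length T) T (0, 0).

Definition is_tour (I : list seg) (T : list pt) : Prop :=
  T <> nil /\
  (forall p, In p T -> exists s, In s I /\ on_seg p s) /\
  (forall s, In s I -> exists p, In p T /\ on_seg p s).

Definition dist (a b : pt) : R :=
  sqrt ((fst a - fst b) ^ 2 + (snd a - snd b) ^ 2).

Definition cost (T : list pt) : R :=
  fold_right Rplus 0
    (map (fun i => dist (tpt T i) (tpt T (S i))) (seq 0 (length T))).

Definition orient (a b c : pt) : R :=
  (fst b - fst a) * (snd c - snd a) - (snd b - snd a) * (fst c - fst a).
Definition legs_cross (a b c d : pt) : Prop :=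
  orient a b c * orient a b d < 0 /\ orient c d a * orient c d b < 0.

Definition non_self_crossing (T : list pt) : Prop :=
  forall i j, (i < length T)%nat -> (j < length T)%nat -> i <> j ->
    ~ legs_cross (tpt T i) (tpt T (S i)) (tpt T j) (tpt T (S j)).

Definition no_consecutive_same_seg (I : list seg) (T : list pt) : Prop :=
  forall i s, (i < length T)%nat -> In s I ->
    ~ (on_seg (tpt T i) s /\ on_seg (tpt T (S i)) s).

Definition is_OPT (I : list seg) (T : list pt) : Prop :=
  is_tour I T /\
  (forall T', is_tour I T' -> cost T <= cost T') /\
  no_consecutive_same_seg I T /\
  non_self_crossing T.

(** The tour as a closed curve, parametrised periodically by t in R with
    period m = length T: curve T (k + s) = (1-s) T_k + s T_{k+1}, 0<=s<1. *)
Definition lerp (a b : pt) (s : R) : pt :=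
  ((1 - s) * fst a + s * fst b, (1 - s) * snd a + s * snd b).

Definition curve (T : list pt) (t : R) : pt :=
  let k := (up t - 1)%Z in
  let idx := Z.to_nat (Z.modulo k (Z.of_nat (length T))) in
  lerp (tpt T idx) (tpt T (S idx)) (t - IZR k).

(** Cover-lines.  C_1 passes through the bottom tip of the top-most segment
    (y = bbox_top I - 1); C_k (k >= 1) is at height c1 - (k - 1). *)
Definition cline_y (I : list seg) (k : nat) : R := bbox_top I - 1 - (INR k - 1).

Definition seg_meets_cline (I : list seg) (k : nat) (s : seg) : Prop :=
  sb s <= cline_y I k <= sb s + 1.

Definition covered_by (I : list seg) (k : nat) (s : seg) : Prop :=
  (1 <= k)%nat /\ seg_meets_cline I k s /\
  forall j, (1 <= j)%nat -> (j < k)%nat -> ~ seg_meets_cline I j s.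

Definition in_strip (I : list seg) (tau : nat) (p : pt) : Prop :=
  cline_y I (S tau) <= snd p <= cline_y I tau.

Definition top_seg (I : list seg) (tau : nat) (s : seg) : Prop :=
  In s I /\ seg_meets_cline I tau s.
Definition bottom_seg (I : list seg) (tau : nat) (s : seg) : Prop :=
  In s I /\ covered_by I (S tau) s.

(** A path of OPT_tau: a maximal closed parameter interval [t1, t1 + d]
    (cyclically, t1 normalised to [0, m)) on which the curve stays in S_tau.
    Its entry points are curve T t1 and curve T (t1 + d). *)
Definition strip_path (I : list seg) (T : list pt) (tau : nat) (t1 d : R) : Prop :=
  0 <= t1 < INR (length T) /\ 0 <= d /\
  (forall u, 0 <= u <= d -> in_strip I tau (curve T (t1 + u))) /\
  (forall eps, 0 < eps -> exists u, 0 < u < eps /\ ~ in_strip I tau (curve T (t1 - u))) /\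
  (forall eps, 0 < eps -> exists u, 0 < u < eps /\ ~ in_strip I tau (curve T (t1 + d + u))).

Definition path_meets (T : list pt) (t1 d : R) (s : seg) : Prop :=
  exists u, 0 <= u <= d /\ on_seg (curve T (t1 + u)) s.

Definition excl_covered (I : list seg) (T : list pt) (tau : nat) (t1 d : R) (s : seg) : Prop :=
  path_meets T t1 d s /\
  forall t1' d', strip_path I T tau t1' d' -> t1' <> t1 -> ~ path_meets T t1' d' s.

Definition loop_on (I : list seg) (T : list pt) (k : nat) (t1 d : R) : Prop :=
  snd (curve T t1) = cline_y I k /\ snd (curve T (t1 + d)) = cline_y I k.

Definition cover_line_loop (I : list seg) (T : list pt) (k : nat) (t1 d : R) : Prop :=
  forall u, 0 <= u <= d -> snd (curve T (t1 + u)) = cline_y I k.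

From Stdlib Require Import Reals Lra Lia List ZArith Rgeom Classical ClassicalEpsilon
  Permutation Sorted Mergesort Orders.
(* Imported after Reals so that [dist] is the Euclidean distance of Defs,
   not Rlimit.dist. *)
From Pilot Require Import Defs.
Import ListNotations.
Open Scope R_scope.

(** Suppose a loop of OPT_tau has both entry points on a cover-line L but is
    not a cover-line loop; then some vertex of the loop lies off L.  Replace
    the loop by the projections of its vertices onto L, dropping a vertex
    whenever its projection leaves the segment it lies on; such a segment lies
    strictly on one side of L, so it is a top (resp. bottom) segment of S_tau.
    If none of these segments is exclusively covered by the loop, each is met
    by another path of OPT_tau, i.e. by OPT outside the loop, and visiting
    those points in their order along OPT keeps a tour whose outer part is no
    longer than OPT outside the loop.  Projection onto a horizontal line does
    not lengthen any leg and strictly shortens the one at the off-line vertex,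
    so the new tour is cheaper than OPT, a contradiction. *)

Lemma dist_ge0 a b : 0 <= dist a b.
Proof. apply sqrt_pos. Qed.

Lemma dist_triangle a b c : dist a c <= dist a b + dist b c.
Proof.
  destruct a as [a1 a2], b as [b1 b2], c as [c1 c2].
  pose proof (triangle a1 a2 c1 c2 b1 b2) as H.
  unfold dist_euc, Rsqr in H. unfold dist; cbn [fst snd].
  replace ((a1 - c1) ^ 2 + (a2 - c2) ^ 2) with ((a1 - c1) * (a1 - c1) + (a2 - c2) * (a2 - c2)) by ring.
  replace ((a1 - b1) ^ 2 + (a2 - b2) ^ 2) with ((a1 - b1) * (a1 - b1) + (a2 - b2) * (a2 - b2)) by ring.
  replace ((b1 - c1) ^ 2 + (b2 - c2) ^ 2) with ((b1 - c1) * (b1 - c1) + (b2 - c2) * (b2 - c2)) by ring.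
  exact H.
Qed.

Lemma dist_lerp a b s s' : dist (lerp a b s) (lerp a b s') = Rabs (s' - s) * dist a b.
Proof.
  unfold dist, lerp; cbn [fst snd].
  replace (((1 - s) * fst a + s * fst b - ((1 - s') * fst a + s' * fst b)) ^ 2 +
   ((1 - s) * snd a + s * snd b - ((1 - s') * snd a + s' * snd b)) ^ 2)
   with (Rsqr (s' - s) * ((fst a - fst b) ^ 2 + (snd a - snd b) ^ 2)) by (unfold Rsqr; ring).
  rewrite sqrt_mult_alt by apply Rle_0_sqr.
  rewrite sqrt_Rsqr_abs; reflexivity.
Qed.

Lemma lerp_0 a b : lerp a b 0 = a.
Proof. destruct a; unfold lerp; simpl; f_equal; ring. Qed.

Lemma lerp_1 a b : lerp a b 1 = b.
Proof. destruct b; unfold lerp; simpl; f_equal; ring. Qed.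

Definition hproj (L : R) (p : pt) : pt := (fst p, L).

Lemma hproj_id L p : snd p = L -> hproj L p = p.
Proof. destruct p; unfold hproj; simpl; intros ->; reflexivity. Qed.

Lemma dist_hproj_le L a b : dist (hproj L a) (hproj L b) <= dist a b.
Proof.
  unfold dist, hproj; cbn [fst snd]. apply sqrt_le_1_alt.
  pose proof (pow2_ge_0 (snd a - snd b)). nra.
Qed.

Lemma dist_hproj_lt L a b : snd a <> snd b -> dist (hproj L a) (hproj L b) < dist a b.
Proof.
  intro H. unfold dist, hproj; cbn [fst snd]. apply sqrt_lt_1_alt.
  assert (0 < Rsqr (snd a - snd b)) by (apply Rlt_0_sqr; lra).
  unfold Rsqr in *. replace (L - L) with 0 by ring.
  pose proof (pow2_ge_0 (fst a - fst b)). simpl in *. split; nra.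
Qed.

Fixpoint polylen (l : list pt) : R :=
  match l with
  | a :: ((b :: _) as l') => dist a b + polylen l'
  | _ => 0
  end.

Lemma polylen_cons2 a b l : polylen (a :: b :: l) = dist a b + polylen (b :: l).
Proof. reflexivity. Qed.

Lemma polylen_head_detour x z l : polylen (x :: l) <= dist x z + polylen (z :: l).
Proof.
  destruct l as [|b l].
  - simpl. pose proof (dist_ge0 x z). lra.
  - rewrite !polylen_cons2. pose proof (dist_triangle x z b). lra.
Qed.

Lemma polylen_last_detour l a b :
  l <> nil -> polylen (l ++ [b]) <= polylen (l ++ [a]) + dist a b.
Proof.
  intro Hl. induction l as [|c [|d l] IH]; [congruence| |].
  - simpl. pose proof (dist_triangle c a b). lra.
  - change (polylen (c :: d :: l ++ [b]) <= polylen (c :: d :: l ++ [a]) + dist a b).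
    rewrite !polylen_cons2. specialize (IH ltac:(congruence)). simpl in IH |- *. lra.
Qed.

Lemma polylen_app l1 x l2 :
  polylen (l1 ++ x :: l2) = polylen (l1 ++ [x]) + polylen (x :: l2).
Proof.
  induction l1 as [|a [|b l1] IH]; simpl; try lra.
  simpl in IH. rewrite IH. lra.
Qed.

Lemma polylen_remove l1 x l2 : polylen (l1 ++ l2) <= polylen (l1 ++ x :: l2).
Proof.
  induction l1 as [|a [|b l1] IH].
  - destruct l2 as [|b l2]; simpl; [lra|]. pose proof (dist_ge0 x b). lra.
  - apply polylen_head_detour.
  - change (polylen (a :: b :: l1 ++ l2) <= polylen (a :: b :: l1 ++ x :: l2)).
    rewrite !polylen_cons2. simpl in IH |- *. lra.
Qed.

Lemma polylen_filter {A} (g : A -> pt) (f : A -> bool) x l r :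
  polylen (x :: map g (filter f l) ++ r) <= polylen (x :: map g l ++ r).
Proof.
  revert x. induction l as [|a l IH]; intro x; simpl; [lra|].
  specialize (IH (g a)).
  destruct (f a); simpl.
  - change (dist x (g a) + polylen (g a :: map g (filter f l) ++ r) <=
            dist x (g a) + polylen (g a :: map g l ++ r)). lra.
  - change (polylen (x :: map g (filter f l) ++ r) <= dist x (g a) + polylen (g a :: map g l ++ r)).
    pose proof (polylen_head_detour x (g a) (map g (filter f l) ++ r)). lra.
Qed.

Lemma polylen_hproj_le L l : polylen (map (hproj L) l) <= polylen l.
Proof.
  induction l as [|a [|b l] IH]; simpl; try lra.
  simpl in IH. pose proof (dist_hproj_le L a b). lra.
Qed.

Lemma polylen_hproj_lt L x l v :
  In v l -> snd v <> snd x -> polylen (map (hproj L) (x :: l)) < polylen (x :: l).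
Proof.
  revert x. induction l as [|a l IH]; intros x Hv Hne; [destruct Hv|].
  change (dist (hproj L x) (hproj L a) + polylen (map (hproj L) (a :: l)) <
          dist x a + polylen (a :: l)).
  destruct (Req_dec (snd a) (snd x)) as [E|E].
  - destruct Hv as [<-|Hv]; [congruence|].
    pose proof (IH a Hv ltac:(congruence)). pose proof (dist_hproj_le L x a). lra.
  - pose proof (dist_hproj_lt L x a ltac:(congruence)).
    pose proof (polylen_hproj_le L (a :: l)). lra.
Qed.

Fixpoint psum (f : nat -> R) (n : nat) : R :=
  match n with O => 0 | S k => psum f k + f k end.

Lemma psum_seq f n : fold_right Rplus 0 (map f (seq 0 n)) = psum f n.
Proof.
  assert (Hacc : forall l c, fold_right Rplus c l = c + fold_right Rplus 0 l).
  { induction l as [|x l IHl]; intro c; simpl; [lra|]. rewrite IHl. lra. }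
  induction n as [|n IH]; [reflexivity|].
  rewrite seq_S, map_app, fold_right_app, Hacc, IH. simpl. lra.
Qed.

Lemma psum_ext f g n : (forall i, (i < n)%nat -> f i = g i) -> psum f n = psum g n.
Proof.
  induction n as [|n IH]; intro H; simpl; [reflexivity|].
  rewrite IH by (intros; apply H; lia). rewrite H by lia. reflexivity.
Qed.

Lemma psum_shift f n : psum f (S n) = f O + psum (fun i => f (S i)) n.
Proof. induction n as [|n IH]; simpl in *; [lra|]. rewrite IH. lra. Qed.

Lemma polylen_psum l d0 :
  polylen l = psum (fun i => dist (nth i l d0) (nth (S i) l d0)) (pred (length l)).
Proof.
  induction l as [|a [|b l] IH]; [reflexivity|reflexivity|].
  rewrite polylen_cons2, IH. simpl length. simpl pred.
  rewrite psum_shift. reflexivity.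
Qed.

Lemma cost_closed_polyline x l : cost (x :: l) = polylen ((x :: l) ++ [x]).
Proof.
  unfold cost. rewrite psum_seq, (polylen_psum _ (0, 0)), length_app. simpl length.
  replace (pred (S (length l) + 1)) with (S (length l)) by lia.
  apply psum_ext. intros i Hi. unfold tpt. simpl length.
  rewrite (Nat.mod_small i), (app_nth1 (x :: l)) by (simpl; lia).
  destruct (Nat.eq_dec (S i) (S (length l))) as [E|E].
  - rewrite E, Nat.Div0.mod_same, app_nth2 by (simpl; lia).
    simpl length. rewrite Nat.sub_diag. reflexivity.
  - rewrite Nat.mod_small, app_nth1 by (simpl; lia). reflexivity.
Qed.

Lemma cost_app_le O K e1 e2 :
  O ++ K <> nil -> cost (O ++ K) <= polylen (e2 :: O ++ [e1]) + polylen (e1 :: K ++ [e2]).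
Proof.
  intro Hne.
  assert (Hclose : forall h l, polylen ((h :: l) ++ [h]) <= polylen (e2 :: (h :: l) ++ [e2])).
  { intros h l. simpl app. rewrite polylen_cons2.
    pose proof (polylen_last_detour (h :: l) e2 h ltac:(congruence)) as H.
    simpl app in H. lra. }
  destruct (O ++ K) as [|h l] eqn:E; [contradiction|].
  rewrite cost_closed_polyline. eapply Rle_trans; [apply Hclose|]. rewrite <- E.
  replace (e2 :: (O ++ K) ++ [e2]) with ((e2 :: O) ++ K ++ [e2])
    by (simpl; rewrite app_assoc; reflexivity).
  eapply Rle_trans; [apply (polylen_remove _ e1)|].
  rewrite polylen_app. simpl app. lra.
Qed.

Definition leg_len (T : list pt) (j : nat) : R := dist (tpt T j) (tpt T (S j)).
Definition arclen_nat (T : list pt) (n : nat) : R := psum (leg_len T) n.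
Definition leg_index (t : R) : nat := Z.to_nat (up t - 1).
Definition arclen (T : list pt) (t : R) : R :=
  arclen_nat T (leg_index t) + (t - INR (leg_index t)) * leg_len T (leg_index t).

Lemma up_add t z : up (t + IZR z) = (up t + z)%Z.
Proof.
  destruct (archimed t) as [H1 H2].
  symmetry. apply tech_up; rewrite plus_IZR; lra.
Qed.

Lemma leg_index_spec t : 0 <= t -> INR (leg_index t) <= t < INR (leg_index t) + 1.
Proof.
  intro Ht. destruct (archimed t) as [H1 H2].
  assert (0 < up t)%Z by (apply lt_0_IZR; lra).
  unfold leg_index. rewrite INR_IZR_INZ, Z2Nat.id, minus_IZR by lia. simpl. lra.
Qed.

Lemma leg_index_unique t k : INR k <= t < INR k + 1 -> leg_index t = k.
Proof.
  intro H. unfold leg_index.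
  assert (E : (Z.of_nat k + 1)%Z = up t).
  { apply tech_up; rewrite plus_IZR, <- INR_IZR_INZ; simpl; lra. }
  rewrite <- E, Z.add_simpl_r. apply Nat2Z.id.
Qed.

Lemma tpt_mod T n : tpt T (n mod length T) = tpt T n.
Proof. unfold tpt. rewrite Nat.Div0.mod_mod. reflexivity. Qed.

Lemma tpt_S_mod T n : tpt T (S (n mod length T)) = tpt T (S n).
Proof.
  unfold tpt. f_equal.
  replace (S (n mod length T)) with (1 + n mod length T)%nat by lia.
  rewrite Nat.Div0.add_mod_idemp_r. reflexivity.
Qed.

Lemma tpt_add_length T n : tpt T (n + length T) = tpt T n.
Proof.
  unfold tpt. f_equal.
  rewrite Nat.Div0.add_mod, Nat.Div0.mod_same, Nat.add_0_r, Nat.Div0.mod_mod. reflexivity.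
Qed.

Lemma tpt_In T i : length T <> O -> In (tpt T i) T.
Proof. intro Hm. apply nth_In, Nat.mod_upper_bound, Hm. Qed.

Lemma tpt_surj T q k : In q T -> exists i, (k <= i < k + length T)%nat /\ tpt T i = q.
Proof.
  intro Hq. destruct (In_nth T q (0, 0) Hq) as [j [Hj Hjq]].
  set (m := length T) in *.
  assert (Hres : exists i, (k <= i < k + m)%nat /\ i mod m = j).
  { induction k as [|k [i [Hi Hmod]]].
    - exists j. split; [lia|]. apply Nat.mod_small, Hj.
    - destruct (Nat.eq_dec i k) as [->|E].
      + exists (k + m)%nat. split; [lia|].
        rewrite Nat.Div0.add_mod, Nat.Div0.mod_same, Nat.add_0_r, Nat.Div0.mod_mod. exact Hmod.
      + exists i. split; [lia|exact Hmod]. }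
  destruct Hres as [i [Hi Hmod]]. exists i. split; [exact Hi|].
  unfold tpt. fold m. rewrite Hmod. exact Hjq.
Qed.

Lemma curve_leg_index T t : 0 <= t ->
  curve T t = lerp (tpt T (leg_index t)) (tpt T (S (leg_index t))) (t - INR (leg_index t)).
Proof.
  intro Ht. unfold curve.
  destruct (archimed t) as [H1 H2].
  assert (0 < up t)%Z by (apply lt_0_IZR; lra).
  assert (Ek : (up t - 1)%Z = Z.of_nat (leg_index t))
    by (unfold leg_index; rewrite Z2Nat.id by lia; reflexivity).
  rewrite Ek, <- Nat2Z.inj_mod, Nat2Z.id, <- INR_IZR_INZ, tpt_mod, tpt_S_mod. reflexivity.
Qed.

Lemma curve_nat T n : curve T (INR n) = tpt T n.
Proof.
  rewrite curve_leg_index by apply pos_INR.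
  rewrite (leg_index_unique (INR n) n) by lra.
  replace (INR n - INR n) with 0 by ring. apply lerp_0.
Qed.

Lemma curve_leg T t k : INR k <= t <= INR k + 1 ->
  curve T t = lerp (tpt T k) (tpt T (S k)) (t - INR k).
Proof.
  intro Ht. destruct (Req_dec t (INR k + 1)) as [E|E].
  - rewrite E, <- S_INR, curve_nat, S_INR.
    replace (INR k + 1 - INR k) with 1 by ring. rewrite lerp_1. reflexivity.
  - rewrite curve_leg_index by (pose proof (pos_INR k); lra).
    rewrite (leg_index_unique t k) by lra. reflexivity.
Qed.

Lemma curve_periodic T t j : curve T (t + IZR j * INR (length T)) = curve T t.
Proof.
  unfold curve. rewrite INR_IZR_INZ, <- mult_IZR, up_add.
  replace (up t + j * Z.of_nat (length T) - 1)%Z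
    with ((up t - 1) + j * Z.of_nat (length T))%Z by ring.
  rewrite Z_mod_plus_full, plus_IZR. f_equal. ring.
Qed.

Lemma leg_len_periodic T j : leg_len T (j + length T) = leg_len T j.
Proof.
  unfold leg_len. rewrite tpt_add_length.
  replace (S (j + length T)) with (S j + length T)%nat by lia.
  rewrite tpt_add_length. reflexivity.
Qed.

Lemma arclen_nat_add_length T n :
  arclen_nat T (n + length T) = arclen_nat T n + arclen_nat T (length T).
Proof.
  unfold arclen_nat. induction n as [|n IH]; simpl; [lra|].
  rewrite IH, leg_len_periodic. lra.
Qed.

Lemma cost_arclen_nat T : cost T = arclen_nat T (length T).
Proof. apply psum_seq. Qed.

Lemma arclen_periodic T t : 0 <= t ->
  arclen T (t + INR (length T)) = arclen T t + arclen_nat T (length T).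
Proof.
  intro Ht. pose proof (leg_index_spec t Ht).
  assert (E : leg_index (t + INR (length T)) = (leg_index t + length T)%nat)
    by (apply leg_index_unique; rewrite plus_INR; lra).
  unfold arclen. rewrite E, arclen_nat_add_length, leg_len_periodic, plus_INR. ring.
Qed.

Lemma dist_tpt_le_arclen_nat T n n' : (n <= n')%nat ->
  dist (tpt T n) (tpt T n') <= arclen_nat T n' - arclen_nat T n.
Proof.
  induction 1 as [|n' _ IH].
  - unfold dist. rewrite !Rminus_diag, pow_i, Rplus_0_r, sqrt_0 by lia. lra.
  - pose proof (dist_triangle (tpt T n) (tpt T n') (tpt T (S n'))).
    unfold arclen_nat, leg_len in *. simpl. lra.
Qed.

Lemma dist_curve_le_arclen T p q : 0 <= p <= q ->
  dist (curve T p) (curve T q) <= arclen T q - arclen T p.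
Proof.
  intros [Hp Hpq].
  pose proof (leg_index_spec p Hp) as Kp. pose proof (leg_index_spec q ltac:(lra)) as Kq.
  rewrite !curve_leg_index by lra. unfold arclen.
  set (kp := leg_index p) in *. set (kq := leg_index q) in *.
  assert (Hle : (kp <= kq)%nat).
  { destruct (le_lt_dec kp kq) as [|Hlt]; [assumption|].
    apply (le_INR (S kq)) in Hlt. rewrite S_INR in Hlt. lra. }
  destruct (Nat.eq_dec kp kq) as [<-|E].
  - rewrite dist_lerp, Rabs_right by lra. unfold leg_len. nra.
  - pose proof (dist_tpt_le_arclen_nat T (S kp) kq ltac:(lia)) as D.
    pose proof (dist_triangle (lerp (tpt T kp) (tpt T (S kp)) (p - INR kp)) (tpt T (S kp))
                  (lerp (tpt T kq) (tpt T (S kq)) (q - INR kq))) as T1.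
    pose proof (dist_triangle (tpt T (S kp)) (tpt T kq)
                  (lerp (tpt T kq) (tpt T (S kq)) (q - INR kq))) as T2.
    assert (D1 : dist (lerp (tpt T kp) (tpt T (S kp)) (p - INR kp)) (tpt T (S kp))
                 = (1 - (p - INR kp)) * leg_len T kp).
    { rewrite <- (lerp_1 (tpt T kp) (tpt T (S kp))) at 2.
      rewrite dist_lerp, Rabs_right by lra. reflexivity. }
    assert (D2 : dist (tpt T kq) (lerp (tpt T kq) (tpt T (S kq)) (q - INR kq))
                 = (q - INR kq) * leg_len T kq).
    { rewrite <- (lerp_0 (tpt T kq) (tpt T (S kq))) at 1.
      rewrite dist_lerp, Rabs_right by lra. f_equal. ring. }
    rewrite D1 in T1. rewrite D2 in T2.
    unfold arclen_nat, leg_len in *. simpl in D. lra.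
Qed.

Module RLeBool <: TotalLeBool'.
  Definition t := R.
  Definition leb (x y : R) : bool := if Rle_dec x y then true else false.
  Lemma leb_total x y : leb x y = true \/ leb y x = true.
  Proof. unfold leb; destruct (Rle_dec x y), (Rle_dec y x); auto; lra. Qed.
End RLeBool.

Module RSort := Sort RLeBool.

Lemma In_RSort t l : In t (RSort.sort l) <-> In t l.
Proof.
  split; apply Permutation_in; [symmetry|]; apply RSort.Permuted_sort.
Qed.

Lemma Sorted_RSort l : Sorted Rle (RSort.sort l).
Proof.
  generalize (RSort.Sorted_sort l). generalize (RSort.sort l). clear l.
  induction 1 as [|x l _ IH Hd]; constructor; [exact IH|].
  destruct Hd as [|y l' Hxy]; constructor.
  unfold is_true, RLeBool.leb in Hxy. destruct (Rle_dec x y); [assumption|discriminate].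
Qed.

Lemma Sorted_Rle_bracket a b l :
  a <= b -> (forall x, In x l -> a <= x <= b) -> Sorted Rle l -> Sorted Rle (a :: l ++ [b]).
Proof.
  intros Hab Hl Hs.
  assert (Hlb : Sorted Rle (l ++ [b])).
  { induction Hs as [|x l Hs IH Hd]; simpl; [auto|].
    constructor; [apply IH; intros; apply Hl; right; assumption|].
    destruct Hd as [|y l Hxy]; constructor; [|assumption].
    apply Hl; left; reflexivity. }
  constructor; [exact Hlb|].
  destruct l as [|x l]; constructor; [exact Hab|]. apply Hl; left; reflexivity.
Qed.

Lemma polylen_curve_le_arclen T a l b : 0 <= a -> Sorted Rle (a :: l ++ [b]) ->
  polylen (map (curve T) (a :: l ++ [b])) <= arclen T b - arclen T a.
Proof.
  revert a. induction l as [|x l IH]; intros a Ha Hs;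
    apply Sorted_inv in Hs as [Hs Hd]; apply HdRel_inv in Hd.
  - simpl. pose proof (dist_curve_le_arclen T a b ltac:(lra)). lra.
  - change (dist (curve T a) (curve T x) + polylen (map (curve T) (x :: l ++ [b]))
            <= arclen T b - arclen T a).
    pose proof (dist_curve_le_arclen T a x ltac:(lra)).
    pose proof (IH x ltac:(lra) Hs). lra.
Qed.

(* The curve is affine on each leg, so it cannot leave L between two
   consecutive times at which it is on L without a vertex off L. *)
Lemma loop_vertex_off_line T L t1 d u : 0 <= t1 ->
  snd (curve T t1) = L -> snd (curve T (t1 + d)) = L -> 0 <= u <= d ->
  snd (curve T (t1 + u)) <> L ->
  exists i, t1 < INR i < t1 + d /\ snd (tpt T i) <> L.
Proof.
  intros Ht1 He1 He2 Hu Hne.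
  apply NNPP. intro Hno. apply Hne.
  assert (Hall : forall i, t1 < INR i < t1 + d -> snd (tpt T i) = L).
  { intros i Hi. apply NNPP. intro H. apply Hno. exists i. auto. }
  clear Hne Hno.
  set (p := t1 + u).
  pose proof (leg_index_spec p ltac:(unfold p; lra)) as Kp.
  set (k := leg_index p) in *.
  set (yA := snd (tpt T k)). set (yB := snd (tpt T (S k))).
  assert (Hy : forall x, INR k <= x <= INR k + 1 ->
                 snd (curve T x) = yA + (x - INR k) * (yB - yA)).
  { intros x Hx. rewrite (curve_leg T x k Hx). unfold lerp, yA, yB. simpl. ring. }
  assert (Hlo : exists lo, INR k <= lo <= p /\ snd (curve T lo) = L).
  { destruct (Rle_dec (INR k) t1) as [E|E].
    - exists t1. unfold p. split; [lra|assumption].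
    - exists (INR k). split; [lra|]. rewrite curve_nat.
      destruct (Rlt_dec (INR k) (t1 + d)) as [E2|E2].
      + apply Hall. lra.
      + rewrite <- curve_nat. replace (INR k) with (t1 + d) by (unfold p in Kp; lra).
        assumption. }
  assert (Hhi : exists hi, p <= hi <= INR k + 1 /\ snd (curve T hi) = L).
  { destruct (Rle_dec (t1 + d) (INR k + 1)) as [E|E].
    - exists (t1 + d). unfold p. split; [lra|assumption].
    - exists (INR (S k)). rewrite S_INR. split; [lra|].
      rewrite <- S_INR, curve_nat. apply Hall. rewrite S_INR. unfold p in Kp. lra. }
  destruct Hlo as [lo [Hlo1 Hlo2]], Hhi as [hi [Hhi1 Hhi2]].
  rewrite Hy in Hlo2, Hhi2 |- * by lra.
  destruct (Req_dec p lo) as [<-|Hplo]; [exact Hlo2|].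
  assert (yB = yA) by nra.
  rewrite H in Hlo2 |- *. lra.
Qed.

Definition segs_disjoint (I : list seg) : Prop :=
  forall s s' p, In s I -> In s' I -> on_seg p s -> on_seg p s' -> s = s'.

Section Shortcut.

Variables (I : list seg) (T : list pt) (L t1 d : R) (ts : list R).

Hypothesis T_tour : is_tour I T.
Hypothesis I_disjoint : segs_disjoint I.
Hypothesis t1_range : 0 <= t1 < INR (length T).
Hypothesis d_range : 0 <= d < INR (length T).
Hypothesis entry1_on_L : snd (curve T t1) = L.
Hypothesis entry2_on_L : snd (curve T (t1 + d)) = L.
Hypothesis ts_outside : forall t, In t ts -> t1 + d <= t <= t1 + INR (length T).
Hypothesis ts_on_segs : forall t, In t ts -> exists s, In s I /\ on_seg (curve T t) s.
Hypothesis ts_cover : forall s i, In s I -> t1 < INR i < t1 + d -> on_seg (tpt T i) s ->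
  ~ on_seg (hproj L (tpt T i)) s -> exists t, In t ts /\ on_seg (curve T t) s.

(* The window (t1, t1 + length T] contains exactly one time of each vertex
   of T; the loop is the part of it before t1 + d. *)
Definition first_vertex : nat := Z.to_nat (up t1).
Definition window : list R := map INR (seq first_vertex (length T)).
Definition before_exit (t : R) : bool := if Rlt_dec t (t1 + d) then true else false.
Definition inner_times : list R := RSort.sort (filter before_exit window).
Definition outer_times : list R :=
  RSort.sort (filter (fun t => negb (before_exit t)) window ++ ts).
Definition projectable (p : pt) : bool :=
  if excluded_middle_informative (forall s, In s I -> on_seg p s -> on_seg (hproj L p) s)
  then true else false.
Definition shortcut : list pt :=
  map (curve T) outer_times ++ map (hproj L) (filter projectable (map (curve T) inner_times)).

Lemma first_vertex_spec : t1 < INR first_vertex <= t1 + 1.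
Proof.
  destruct (archimed t1) as [H1 H2].
  assert (0 < up t1)%Z by (apply lt_0_IZR; lra).
  unfold first_vertex. rewrite INR_IZR_INZ, Z2Nat.id by lia. lra.
Qed.

Lemma In_window t :
  In t window -> exists i, t = INR i /\ t1 < t <= t1 + INR (length T).
Proof.
  unfold window. intros [i [<- Hi]]%in_map_iff. apply in_seq in Hi.
  exists i. split; [reflexivity|]. pose proof first_vertex_spec.
  destruct Hi as [Hi1 Hi2]. apply le_INR in Hi1.
  apply le_INR in Hi2. rewrite S_INR, plus_INR in Hi2. lra.
Qed.

Lemma window_In i : t1 < INR i < t1 + INR (length T) -> In (INR i) window.
Proof.
  intros Hi. apply in_map, in_seq. pose proof first_vertex_spec.
  destruct (archimed t1) as [H1 H2].
  split.
  - assert (Hup : (up t1 < Z.of_nat i + 1)%Z).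
    { apply lt_IZR. rewrite plus_IZR, <- INR_IZR_INZ. simpl. lra. }
    unfold first_vertex. lia.
  - apply INR_lt. rewrite plus_INR. lra.
Qed.

Lemma length_T_neq0 : length T <> O.
Proof. intro E. rewrite E in t1_range. simpl in t1_range. lra. Qed.

Lemma In_inner_times t : In t inner_times <-> In t window /\ t < t1 + d.
Proof.
  unfold inner_times. rewrite In_RSort, filter_In. unfold before_exit.
  destruct (Rlt_dec t (t1 + d)); intuition discriminate.
Qed.

Lemma inner_times_range t : In t inner_times -> t1 < t < t1 + d.
Proof.
  intros [Hw Ht]%In_inner_times. destruct (In_window t Hw) as [_ [_ H]]. lra.
Qed.

Lemma outer_times_range t : In t outer_times -> t1 + d <= t <= t1 + INR (length T).
Proof.
  unfold outer_times. rewrite In_RSort. intros [Ht|Ht]%in_app_or; [|auto].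
  apply filter_In in Ht as [Hw Hb]. destruct (In_window t Hw) as [_ [_ H]].
  unfold before_exit in Hb. destruct (Rlt_dec t (t1 + d)); [discriminate|lra].
Qed.

Lemma shortcut_on_segs p : In p shortcut -> exists s, In s I /\ on_seg p s.
Proof.
  destruct T_tour as [_ [T_on_segs _]].
  unfold shortcut. intros [Hp|Hp]%in_app_or; apply in_map_iff in Hp as [q [<- Hq]].
  - unfold outer_times in Hq. rewrite In_RSort in Hq.
    apply in_app_or in Hq as [Hq|Hq]; [|auto].
    apply filter_In in Hq as [Hw _]. destruct (In_window q Hw) as [i [-> _]].
    rewrite curve_nat. apply T_on_segs, tpt_In, length_T_neq0.
  - apply filter_In in Hq as [Hq Hproj]. unfold projectable in Hproj.
    destruct excluded_middle_informative as [Hall|]; [|discriminate].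
    apply in_map_iff in Hq as [t [<- Ht]].
    apply In_inner_times in Ht as [Hw _]. destruct (In_window t Hw) as [i [-> _]].
    rewrite curve_nat in Hall |- *.
    destruct (T_on_segs _ (tpt_In T i length_T_neq0)) as [s [Hs Hon]].
    exists s. auto.
Qed.

Lemma shortcut_covers s : In s I -> exists p, In p shortcut /\ on_seg p s.
Proof.
  intro Hs. destruct T_tour as [_ [_ T_covers]].
  destruct (T_covers s Hs) as [q [Hq Hqs]].
  destruct (tpt_surj T q first_vertex Hq) as [i [Hi <-]].
  assert (Hw : In (INR i) window) by (apply in_map, in_seq; exact Hi).
  assert (Houter : forall t, In t outer_times -> In (curve T t) shortcut)
    by (intros; apply in_or_app; left; apply in_map; assumption).
  destruct (Rlt_dec (INR i) (t1 + d)) as [Lt|Ge].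
  - destruct (projectable (tpt T i)) eqn:Hproj.
    + exists (hproj L (tpt T i)). split.
      * apply in_or_app. right. apply in_map, filter_In. split; [|exact Hproj].
        rewrite <- curve_nat. apply in_map, In_inner_times. auto.
      * unfold projectable in Hproj.
        destruct excluded_middle_informative as [Hall|]; [auto|discriminate].
    + unfold projectable in Hproj.
      destruct excluded_middle_informative as [|Hnot]; [discriminate|].
      apply not_all_ex_not in Hnot as [s' Hnot].
      apply imply_to_and in Hnot as [Hs' Hnot]. apply imply_to_and in Hnot as [Hon Hoff].
      assert (s' = s) as -> by (apply (I_disjoint s' s (tpt T i)); assumption).
      destruct (In_window _ Hw) as [_ [_ Hrange]].
      destruct (ts_cover s i Hs ltac:(lra) Hqs Hoff) as [t [Ht Hts]].
      exists (curve T t). split; [|exact Hts].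
      apply Houter. unfold outer_times. rewrite In_RSort. apply in_or_app. auto.
  - exists (curve T (INR i)). rewrite curve_nat. split; [|exact Hqs].
    rewrite <- curve_nat. apply Houter. unfold outer_times. rewrite In_RSort.
    apply in_or_app. left. apply filter_In. split; [exact Hw|].
    unfold before_exit. destruct (Rlt_dec (INR i) (t1 + d)); [contradiction|reflexivity].
Qed.

Lemma shortcut_is_tour : is_tour I shortcut.
Proof.
  split; [|split; [exact shortcut_on_segs|exact shortcut_covers]].
  destruct T_tour as [_ [T_on_segs _]].
  destruct (T_on_segs _ (tpt_In T 0 length_T_neq0)) as [s [Hs _]].
  destruct (shortcut_covers s Hs) as [p [Hp _]].
  intro E. rewrite E in Hp. destruct Hp.
Qed.

Lemma shortcut_outer_len :
  polylen (curve T (t1 + d) :: map (curve T) outer_times ++ [curve T t1])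
  <= arclen T (t1 + INR (length T)) - arclen T (t1 + d).
Proof.
  replace (curve T t1) with (curve T (t1 + INR (length T)))
    by (rewrite <- (curve_periodic T t1 1); f_equal; ring).
  rewrite <- (map_cons (curve T) _ []), <- map_app, <- map_cons.
  apply polylen_curve_le_arclen; [lra|].
  apply Sorted_Rle_bracket; [lra|exact outer_times_range|apply Sorted_RSort].
Qed.

Lemma shortcut_inner_len i : t1 < INR i < t1 + d -> snd (tpt T i) <> L ->
  polylen (curve T t1 :: map (hproj L) (filter projectable (map (curve T) inner_times))
             ++ [curve T (t1 + d)])
  < arclen T (t1 + d) - arclen T t1.
Proof.
  intros Hi Hoff.
  set (P := map (curve T) inner_times).
  assert (Hfilter :
    polylen (curve T t1 :: map (hproj L) (filter projectable P) ++ [curve T (t1 + d)])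
    <= polylen (map (hproj L) (curve T t1 :: P ++ [curve T (t1 + d)]))).
  { rewrite map_cons, map_app. simpl (map _ [_]).
    rewrite !hproj_id by assumption. apply polylen_filter. }
  assert (Hproj : polylen (map (hproj L) (curve T t1 :: P ++ [curve T (t1 + d)]))
                  < polylen (curve T t1 :: P ++ [curve T (t1 + d)])).
  { apply (polylen_hproj_lt L _ _ (tpt T i)).
    - apply in_or_app. left. rewrite <- curve_nat. apply in_map, In_inner_times.
      split; [apply window_In|]; lra.
    - rewrite entry1_on_L. exact Hoff. }
  assert (Harc : polylen (curve T t1 :: P ++ [curve T (t1 + d)])
                 <= arclen T (t1 + d) - arclen T t1).
  { unfold P. rewrite <- (map_cons (curve T) _ []), <- map_app, <- map_cons.
    apply polylen_curve_le_arclen; [lra|].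
    apply Sorted_Rle_bracket; [lra| |apply Sorted_RSort].
    intros t Ht. apply inner_times_range in Ht. lra. }
  lra.
Qed.

Lemma shortcut_cost_lt i : t1 < INR i < t1 + d -> snd (tpt T i) <> L ->
  cost shortcut < cost T.
Proof.
  intros Hi Hoff.
  pose proof shortcut_outer_len. pose proof (shortcut_inner_len i Hi Hoff).
  pose proof (arclen_periodic T t1 ltac:(lra)).
  assert (Hne : shortcut <> nil) by apply shortcut_is_tour.
  pose proof (cost_app_le _ _ (curve T t1) (curve T (t1 + d)) Hne).
  rewrite (cost_arclen_nat T). unfold shortcut in *. lra.
Qed.

End Shortcut.

Lemma list_choice {A B} (P : A -> Prop) (Q : A -> B -> Prop) (l : list A) :
  (forall x, In x l -> P x -> exists y, Q x y) ->
  exists ys, (forall y, In y ys -> exists x, In x l /\ Q x y) /\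
             (forall x, In x l -> P x -> exists y, In y ys /\ Q x y).
Proof.
  induction l as [|x l IH]; intro H.
  - exists nil. split; [intros y []|intros x []].
  - destruct IH as [ys [Hsound Hcomplete]]; [intros; apply H; [right|]; assumption|].
    destruct (classic (P x)) as [Px|nPx].
    + destruct (H x (or_introl eq_refl) Px) as [y Hy].
      exists (y :: ys). split.
      * intros y' [<-|Hy']; [exists x; split; [left|]; auto|].
        destruct (Hsound y' Hy') as [x' [Hx' Q']]. exists x'. split; [right|]; auto.
      * intros x' [<-|Hx'] Px'; [exists y; split; [left|]; auto|].
        destruct (Hcomplete x' Hx' Px') as [y' [Hy' Q']]. exists y'. split; [right|]; auto.
    + exists ys. split.
      * intros y Hy. destruct (Hsound y Hy) as [x' [Hx' Q']]. exists x'. split; [right|]; auto.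
      * intros x' [<-|Hx'] Px'; [contradiction|]. apply Hcomplete; assumption.
Qed.

Lemma opt_loop_on_line I T L t1 d :
  is_tour I T -> (forall T', is_tour I T' -> cost T <= cost T') -> segs_disjoint I ->
  0 <= t1 < INR (length T) -> 0 <= d < INR (length T) ->
  snd (curve T t1) = L -> snd (curve T (t1 + d)) = L ->
  (forall s i, In s I -> t1 < INR i < t1 + d -> on_seg (tpt T i) s ->
     ~ on_seg (hproj L (tpt T i)) s ->
     exists t, t1 + d <= t <= t1 + INR (length T) /\ on_seg (curve T t) s) ->
  forall u, 0 <= u <= d -> snd (curve T (t1 + u)) = L.
Proof.
  intros T_tour T_min I_disjoint t1_range d_range entry1_on_L entry2_on_L Hvisited u Hu.
  destruct (Req_dec (snd (curve T (t1 + u))) L) as [|Hne]; [assumption|exfalso].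
  destruct (loop_vertex_off_line T L t1 d u ltac:(lra) entry1_on_L entry2_on_L Hu Hne)
    as [i [Hi Hoff]].
  destruct (list_choice
              (fun s => exists j, t1 < INR j < t1 + d /\ on_seg (tpt T j) s /\
                                  ~ on_seg (hproj L (tpt T j)) s)
              (fun s t => t1 + d <= t <= t1 + INR (length T) /\ on_seg (curve T t) s) I)
    as [ts [Hsound Hcomplete]].
  { intros s Hs [j [Hj [Hon Hoff']]]. apply (Hvisited s j); assumption. }
  assert (ts_outside : forall t, In t ts -> t1 + d <= t <= t1 + INR (length T))
    by (intros t Ht; destruct (Hsound t Ht) as [s [_ []]]; assumption).
  assert (ts_on_segs : forall t, In t ts -> exists s, In s I /\ on_seg (curve T t) s)
    by (intros t Ht; destruct (Hsound t Ht) as [s [Hs [_ Hon]]]; eauto).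
  assert (ts_cover : forall s j, In s I -> t1 < INR j < t1 + d -> on_seg (tpt T j) s ->
            ~ on_seg (hproj L (tpt T j)) s -> exists t, In t ts /\ on_seg (curve T t) s).
  { intros s j Hs Hj Hon Hoff'.
    destruct (Hcomplete s Hs (ex_intro _ j (conj Hj (conj Hon Hoff')))) as [t [Ht [_ Hts]]].
    eauto. }
  assert (Htour : is_tour I (shortcut I T L t1 d ts))
    by (eapply shortcut_is_tour; eassumption).
  assert (Hlt : cost (shortcut I T L t1 d ts) < cost T)
    by (eapply shortcut_cost_lt; eassumption).
  specialize (T_min _ Htour). lra.
Qed.

Lemma strip_path_length_lt I T tau t1 d : strip_path I T tau t1 d -> d < INR (length T).
Proof.
  intros [Ht1 [Hd [Hin [Hleft _]]]].
  destruct (Rlt_dec d (INR (length T))) as [|Hge]; [assumption|exfalso].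
  destruct (Hleft (INR (length T)) ltac:(lra)) as [v [Hv Hout]].
  apply Hout. rewrite <- (curve_periodic T (t1 - v) 1).
  replace (t1 - v + IZR 1 * INR (length T)) with (t1 + (INR (length T) - v)) by (simpl; ring).
  apply Hin. lra.
Qed.

(* Shift the second path by a multiple of the period so that it meets
   [t1, t1 + length T); maximality of both paths forbids an overlap. *)
Lemma strip_path_other_outside I T tau t1 d t1' d' u :
  strip_path I T tau t1 d -> strip_path I T tau t1' d' -> t1' <> t1 -> 0 <= u <= d' ->
  exists t, t1 + d <= t <= t1 + INR (length T) /\ curve T t = curve T (t1' + u).
Proof.
  intros [Ht1 [Hd [Hin [Hleft _]]]] [Ht1' [Hd' [Hin' [Hleft' _]]]] Hne Hu.
  set (m := INR (length T)) in *.
  set (z := up ((t1' + u - t1) / m)).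
  destruct (archimed ((t1' + u - t1) / m)) as [Hz1 Hz2]. fold z in Hz1, Hz2.
  assert (Hz : (IZR z - 1) * m <= t1' + u - t1 < IZR z * m).
  { replace (t1' + u - t1) with ((t1' + u - t1) / m * m) by (field; lra). split; nra. }
  set (a := t1' + IZR (1 - z) * m).
  assert (Ha : t1 <= a + u < t1 + m) by (unfold a; rewrite minus_IZR; simpl; nra).
  assert (Hshift : forall w, curve T (t1' + w) = curve T (a + w)).
  { intro w. unfold a. rewrite <- (curve_periodic T (t1' + w) (1 - z)). f_equal. fold m. ring. }
  destruct (Rle_dec (t1 + d) (a + u)) as [Ge|Lt].
  { exists (a + u). split; [lra|]. symmetry. apply Hshift. }
  exfalso.
  destruct (total_order_T a t1) as [[Lt0|Eq0]|Gt0].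
  - destruct (Hleft (t1 - a) ltac:(lra)) as [v [Hv Hout]].
    apply Hout. replace (t1 - v) with (a + (t1 - v - a)) by ring.
    rewrite <- Hshift. apply Hin'. lra.
  - assert (Hj : IZR (1 - z) * m = t1 - t1') by (unfold a in Eq0; lra).
    assert (IZR (1 - z) < 1) by (apply (Rmult_lt_reg_r m); lra).
    assert (-1 < IZR (1 - z)) by (apply (Rmult_lt_reg_r m); lra).
    apply lt_IZR in H. apply lt_IZR in H0.
    replace (1 - z)%Z with 0%Z in Hj by lia. simpl in Hj. lra.
  - destruct (Hleft' (a - t1) ltac:(lra)) as [v [Hv Hout]].
    apply Hout. replace (t1' - v) with (t1' + - v) by ring. rewrite Hshift.
    replace (a + - v) with (t1 + (a - v - t1)) by ring. apply Hin. lra.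
Qed.

Lemma not_excl_covered_visited_outside I T tau t1 d s :
  strip_path I T tau t1 d -> path_meets T t1 d s -> ~ excl_covered I T tau t1 d s ->
  exists t, t1 + d <= t <= t1 + INR (length T) /\ on_seg (curve T t) s.
Proof.
  intros HP Hmeet Hnot.
  assert (Hother : exists t1' d', strip_path I T tau t1' d' /\ t1' <> t1 /\ path_meets T t1' d' s).
  { apply NNPP. intro Hno. apply Hnot. split; [exact Hmeet|].
    intros t1' d' HP' Hne Hm. apply Hno. eauto. }
  destruct Hother as [t1' [d' [HP' [Hne [u [Hu Hon]]]]]].
  destruct (strip_path_other_outside I T tau t1 d t1' d' u HP HP' Hne Hu) as [t [Ht E]].
  exists t. rewrite E. auto.
Qed.

Lemma instance_segs_disjoint I : instance I -> segs_disjoint I.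
Proof.
  intros [_ Hnd] s s' p Hs Hs' [Hx _] [Hx' _].
  assert (Hsx : sx s = sx s') by congruence. clear Hx Hx'.
  induction I as [|a I IH]; [destruct Hs|].
  simpl in Hnd. apply NoDup_cons_iff in Hnd as [Ha Hnd].
  destruct Hs as [<-|Hs], Hs' as [<-|Hs']; auto; exfalso; apply Ha.
  - rewrite Hsx. apply in_map, Hs'.
  - rewrite <- Hsx. apply in_map, Hs.
Qed.

(* [Good] stands for top segments when L = C_(tau+1) and for bottom
   segments when L = C_tau. *)
Lemma strip_loop_excl_covered_or_on_line I T tau t1 d L (Good : seg -> Prop) :
  instance I -> is_OPT I T -> strip_path I T tau t1 d ->
  snd (curve T t1) = L -> snd (curve T (t1 + d)) = L ->
  (forall s p, In s I -> on_seg p s -> in_strip I tau p -> ~ (sb s <= L <= sb s + 1) ->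
     Good s) ->
  (exists s, Good s /\ excl_covered I T tau t1 d s) \/
  (forall u, 0 <= u <= d -> snd (curve T (t1 + u)) = L).
Proof.
  intros Hinst [Htour [Hmin _]] HP He1 He2 HGood.
  destruct (classic (exists s, Good s /\ excl_covered I T tau t1 d s)) as [|Hnone];
    [left; assumption|right].
  pose proof HP as [Ht1 [Hd [Hin _]]].
  apply (opt_loop_on_line I T L t1 d Htour Hmin (instance_segs_disjoint I Hinst) Ht1
           (conj Hd (strip_path_length_lt I T tau t1 d HP)) He1 He2).
  intros s i Hs Hi Hon Hoff.
  assert (Hcurve : curve T (t1 + (INR i - t1)) = tpt T i)
    by (replace (t1 + (INR i - t1)) with (INR i) by ring; apply curve_nat).
  apply (not_excl_covered_visited_outside I T tau t1 d s HP).
  - exists (INR i - t1). split; [lra|rewrite Hcurve; exact Hon].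
  - intro Hexcl. apply Hnone. exists s. split; [|exact Hexcl].
    apply (HGood s (tpt T i) Hs Hon).
    + rewrite <- Hcurve. apply Hin. lra.
    + intro HL. apply Hoff. split; [apply Hon|exact HL].
Qed.

Lemma cline_y_S I k : cline_y I (S k) = cline_y I k - 1.
Proof. unfold cline_y. rewrite S_INR. ring. Qed.

Lemma top_seg_of_off_bottom_line I tau s p :
  In s I -> on_seg p s -> in_strip I tau p -> ~ (sb s <= cline_y I (S tau) <= sb s + 1) ->
  top_seg I tau s.
Proof.
  intros Hs [_ Hp] Hstrip Hoff. split; [exact Hs|].
  unfold in_strip, seg_meets_cline in *. rewrite cline_y_S in *. lra.
Qed.

Lemma bottom_seg_of_off_top_line I tau s p : (1 <= tau)%nat ->
  In s I -> on_seg p s -> in_strip I tau p -> ~ (sb s <= cline_y I tau <= sb s + 1) ->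
  bottom_seg I tau s.
Proof.
  intros Htau Hs [_ Hp] Hstrip Hoff. unfold in_strip in Hstrip. rewrite cline_y_S in Hstrip.
  split; [exact Hs|]. split; [lia|split].
  - unfold seg_meets_cline. rewrite cline_y_S. lra.
  - intros j Hj1 Hj2 Hmeet. unfold seg_meets_cline, cline_y in *.
    assert (INR j <= INR tau) by (apply le_INR; lia). lra.
Qed.

Theorem lemma19 (I : list seg) (T : list pt) (tau : nat) :
  instance I -> bbox_height I > 3 -> is_OPT I T -> (1 <= tau)%nat ->
  (forall t1 d, strip_path I T tau t1 d -> loop_on I T (S tau) t1 d ->
     (exists s, top_seg I tau s /\ excl_covered I T tau t1 d s)
     \/ cover_line_loop I T (S tau) t1 d) /\
  (forall t1 d, strip_path I T tau t1 d -> loop_on I T tau t1 d ->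
     (exists s, bottom_seg I tau s /\ excl_covered I T tau t1 d s)
     \/ cover_line_loop I T tau t1 d).
Proof.
  intros Hinst _ Hopt Htau. split; intros t1 d HP [He1 He2].
  - apply (strip_loop_excl_covered_or_on_line I T tau t1 d _ _ Hinst Hopt HP He1 He2).
    apply top_seg_of_off_bottom_line.
  - apply (strip_loop_excl_covered_or_on_line I T tau t1 d _ _ Hinst Hopt HP He1 He2).
    intros s p. apply bottom_seg_of_off_top_line. exact Htau.
Qed.
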